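(* Let $n\ge2$ and $k\ge1$ with $2k\le n$. Let $w_0w_1\dots w_{2k+1}$ be any Dyck word of length $2(k+1)$ over $\{u,d\}$. Define the sequence $s_1s_2\dots s_{2k}$ by: if $w_i$ is the $r$-th letter $d$ among $w_1,\dots,w_{2k}$, then $s_i$ is the $r$-th smallest element of $A_{2k}=\{1,2,4,\dots,2k-2\}$; if $w_i$ is the $r$-th letter $u$ among $w_1,\dots,w_{2k}$, then $s_i$ is the $r$-th smallest element of $[2k]\setminus A_{2k}=\{3,5,\dots,2k-1,2k\}$. Then $s_1s_2\dots s_{2k}$ is the sequence of the top $2k$ alternatives of some order belonging to part $k$ of $D_X(A_n)$.
   Context: A Dyck word of length $2m$ is a sequence $a_1\dots a_{2m}$ of $m$ letters $u$ and $m$ letters $d$ such that every prefix contains at least as many $u$'s as $d$'s (so $w_0=u$, $w_{2k+1}=d$, and $w_1\dots w_{2k}$ has $k$ letters of each kind). For $m\ge1$ let $A_m=\{1\}\cup\{\text{even } j: 2\le j\le m-1\}$. For $A\subseteq[n]$, $D_X(A)$ is the set of all linear orders $q$ on $[n]$ (written top to bottom) such that for every triple $i<j<l$: if $j\in A$ then $i$ is not ranked last among $\{i,j,l\}$ in $q$, and if $j\notin A$ then $l$ is not ranked first among $\{i,j,l\}$ in $q$. Part $k$ of $D_X(A_n)$ consists of the orders in $D_X(A_n)$ whose top $2k$ positions are occupied exactly by $[2k]$ but, when $k\ge2$, whose top $2(k-1)$ positions are not occupied exactly by $[2(k-1)]$. *)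

From mathcomp Require Import all_boot.
Set Implicit Arguments. Unset Strict Implicit. Unset Printing Implicit Defensive.

(* Letters of a word: true = u, false = d. *)

Definition dyck (w : seq bool) : bool :=
  (count id w == count negb w) &&
  all (fun p => count negb (take p w) <= count id (take p w)) (iota 0 (size w).+1).

Definition Aset (m : nat) : pred nat :=
  fun j => (j == 1) || [&& ~~ odd j, 2 <= j & j <= m.-1].

(* A linear order on [n] = {1..n}, written top to bottom as a sequence;
   position (index) 0 is the top. *)
Definition is_order (n : nat) (q : seq nat) : bool := perm_eq q (iota 1 n).

Definition DX (n : nat) (A : pred nat) (q : seq nat) : Prop :=
  is_order n q /\
  forall i j l : nat, 1 <= i -> i < j -> j < l -> l <= n ->
    (A j -> ~~ ((index j q < index i q) && (index l q < index i q))) /\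
    (~~ A j -> ~~ ((index l q < index i q) && (index l q < index j q))).

Definition top_is (q : seq nat) (m : nat) : bool := perm_eq (take m q) (iota 1 m).

Definition in_part (n k : nat) (q : seq nat) : Prop :=
  DX n (Aset n) q /\ top_is q (2 * k) /\ (2 <= k -> ~~ top_is q (2 * (k - 1))).

Definition Alist (k : nat) : seq nat := [seq j <- iota 1 (2 * k) | Aset (2 * k) j].
Definition Clist (k : nat) : seq nat := [seq j <- iota 1 (2 * k) | ~~ Aset (2 * k) j].

Definition sseq (k : nat) (w : seq bool) : seq nat :=
  [seq (let c := nth false w i in
        let r := count (pred1 c) (take i (drop 1 w)) in
        if c then nth 0 (Clist k) r.-1 else nth 0 (Alist k) r.-1)
  | i <- iota 1 (2 * k)].

(* Write w = u v d.  Reading v left to right, each u emits the next element of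
   C = [2k] \ A_2k = 3,5,...,2k-1,2k and each d the next element of
   A_2k = 1,2,4,...,2k-2; this produces s.  The r-th element of A_2k is smaller
   than the j-th element of C whenever r <= j, and by the ballot property of v,
   when a d emits the r-th element of A_2k at least r elements of C have been
   emitted.  So every emitted element of A_2k is smaller than all C-elements
   still pending, and the only inversions of s put an element of C above a
   smaller element of A_2k.  Appending 2k+1, ..., n gives an order q with the
   same inversions, and these cannot produce the two patterns forbidden in
   D_X(A_n).  (In the first one i lies below j and below some l <= 2k, so j is
   an element of C below 2k, hence not in A_n.)  Finally the first 2k-2 letters
   of v contain at least k-1 u's, whereas [2k-2] contains only k-2 elements of
   C, so the top 2k-2 positions of q are not [2k-2]. *)

From mathcomp Require Import all_boot zify.

Set Implicit Arguments.
Unset Strict Implicit.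
Unset Printing Implicit Defensive.

Section Interleave.

Variables (T : eqType) (x0 : T).

(* [x0] is a junk value, emitted only when a list runs out; the counting
   hypotheses of the lemmas below exclude this. *)

Fixpoint interleave (v : seq bool) (A C : seq T) : seq T :=
  if v is b :: v' then
    if b then head x0 C :: interleave v' A (behead C)
    else head x0 A :: interleave v' (behead A) C
  else [::].

Lemma size_interleave v A C : size (interleave v A C) = size v.
Proof. by elim: v A C => [|[] v IH] A C //=; rewrite IH. Qed.

Lemma nth_interleave v A C p : p < size v ->
  nth x0 (interleave v A C) p =
  if nth false v p then nth x0 C (count id (take p v))
  else nth x0 A (count negb (take p v)).
Proof.
elim: v A C p => [|b v IH] A C [|p] //= lt_pv; first by case: b; rewrite nth0.
by case: b => /=; rewrite IH //; case: (nth false v p); rewrite /= ?nth_behead.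
Qed.

Lemma perm_interleave v A C : count negb v = size A -> count id v = size C ->
  perm_eq (interleave v A C) (A ++ C).
Proof.
elim: v A C => [|[] v IH] A C /=; first by case: A; case: C.
- case: C => [|c C] // size_A [size_C].
  by rewrite perm_sym (perm_catCA A [:: c]) perm_cons perm_sym IH.
- case: A => [|a A] // [size_A] size_C.
  by rewrite perm_cons IH.
Qed.

Lemma map_interleave (P : pred T) v A C : all (predC P) A -> all P C ->
  count negb v <= size A -> count id v <= size C ->
  map P (interleave v A C) = v.
Proof.
elim: v A C => [|[] v IH] A C //=.
- case: C => [|c C] //= notPA /andP[Pc PC] size_A size_C.
  by rewrite Pc IH.
- case: A => [|a A] //= /andP[notPa notPA] PC size_A size_C.
  by rewrite (negbTE notPa) IH.
Qed.

End Interleave.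

Definition cross_inversions (X Y : pred nat) (s : seq nat) : Prop :=
  forall x y, x < y -> x \in s -> y \in s -> index y s < index x s -> X x && Y y.

Lemma cross_inversions_cons X Y a s : cross_inversions X Y s ->
  (forall x, x \in s -> x < a -> X x && Y a) -> cross_inversions X Y (a :: s).
Proof.
move=> inv_s inv_a x y lt_xy; rewrite !inE /=.
case: eqVneq => [<-|neq_ax]; first by rewrite ltn0.
rewrite /= => xs; case: eqVneq lt_xy => [-> lt_xa _ _|neq_ay lt_xy]; first exact: inv_a.
by rewrite /= ltnS; apply: inv_s.
Qed.

Lemma cross_inversions_cat X Y s t : cross_inversions X Y s -> sorted ltn t ->
  (forall x y, x \in s -> y \in t -> x < y) -> cross_inversions X Y (s ++ t).
Proof.
move=> inv_s sorted_t lt_st x y lt_xy; rewrite !mem_cat !index_cat.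
have [xs|xs] := boolP (x \in s); have [ys|ys] := boolP (y \in s) => //= xt yt lt_idx.
- exact: inv_s.
- have : index x s < size s by rewrite index_mem.
  lia.
- by have := lt_st y x ys xt; lia.
- exfalso; move: lt_idx; rewrite ltn_add2l.
  by move=> /(sorted_ltn_index ltn_trans sorted_t _ _ yt xt); lia.
Qed.

Fixpoint below_pending (v : seq bool) (A C : seq nat) : bool :=
  if v is b :: v' then
    if b then below_pending v' A (behead C)
    else all (fun c => head 0 A < c) C && below_pending v' (behead A) C
  else true.

Lemma cross_inversions_interleave X Y v A C :
  {subset A <= X} -> {subset C <= Y} -> sorted ltn A -> sorted ltn C ->
  count negb v = size A -> count id v = size C -> below_pending v A C ->
  cross_inversions X Y (interleave 0 v A C).
Proof.
elim: v A C => [|b v IH] A C AX CY sorted_A sorted_C; first by move=> _ _ _ x y.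
case: b => /=; rewrite ?add0n ?add1n.
- case: C CY sorted_C => [|c C] //= CY sorted_C size_A [size_C] below.
  have perm_s := perm_interleave 0 size_A size_C.
  apply: cross_inversions_cons.
    apply: IH => //; last exact: path_sorted sorted_C.
    by move=> z zC; apply: CY; rewrite inE zC orbT.
  move=> x; rewrite (perm_mem perm_s) mem_cat => /orP[xA|xC] lt_xc.
    by apply/andP; split; [apply: AX | apply: CY; rewrite mem_head].
  by have /allP/(_ x xC) := order_path_min ltn_trans sorted_C; lia.
- case: A AX sorted_A => [|a A] //= AX sorted_A [size_A] size_C /andP[a_lt_C below].
  have perm_s := perm_interleave 0 size_A size_C.
  apply: cross_inversions_cons.
    apply: IH => //; last exact: path_sorted sorted_A.
    by move=> z zA; apply: AX; rewrite inE zA orbT.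
  move=> x; rewrite (perm_mem perm_s) mem_cat => /orP[xA|xC] lt_xa.
    by have /allP/(_ x xA) := order_path_min ltn_trans sorted_A; lia.
  by have /allP/(_ x xC) := a_lt_C; lia.
Qed.

Lemma below_pending_drop (A C : seq nat) :
  (forall r j, r <= j < size C -> nth 0 A r < nth 0 C j) ->
  forall v r t, (forall p, r + count negb (take p v) <= (t + count id (take p v)).+1) ->
  below_pending v (drop r A) (drop t C).
Proof.
move=> lt_AC; elim=> [|b v IH] r t //= ballot.
have {}ballot p : r + ~~ b + count negb (take p v) <= (t + b + count id (take p v)).+1.
  by have := ballot p.+1; rewrite /=; lia.
case: b ballot => /= ballot.
- by rewrite -drop1 drop_drop; apply: IH => p; have := ballot p; lia.
- apply/andP; split; last by rewrite -drop1 drop_drop; apply: IH => p; have := ballot p; lia.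
  have le_rt : r <= t by have := ballot 0; rewrite take0 /=; lia.
  apply/allP => c /(nthP 0)[i]; rewrite size_drop nth_drop => lt_i <-.
  rewrite -nth0 nth_drop addn0; apply: lt_AC.
  by rewrite (leq_trans le_rt (leq_addr i t)) -ltn_subRL.
Qed.

Lemma Aset_even m i : Aset m (2 * i) = (0 < i) && (2 * i < m).
Proof. by rewrite /Aset oddM /=; lia. Qed.

Lemma Aset_odd m i : Aset m (2 * i).+1 = (i == 0).
Proof. by rewrite /Aset /= oddM /=; lia. Qed.

Lemma Aset_widen m N j : m <= N -> Aset m j -> Aset N j.
Proof. by rewrite /Aset; lia. Qed.

Lemma Aset_narrow m N j : j < m -> Aset N j -> Aset m j.
Proof. by rewrite /Aset; lia. Qed.

Lemma filter_Aset_iota K N : N <= K ->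
  [seq j <- iota 1 (2 * N).+1 | Aset (2 * K.+1) j] = 1 :: [seq 2 * i | i <- iota 1 N] /\
  [seq j <- iota 1 (2 * N).+1 | ~~ Aset (2 * K.+1) j] = [seq (2 * i).+1 | i <- iota 1 N].
Proof.
elim: N => [|N IH] le_NK //.
have iota_step : iota 1 (2 * N.+1).+1 = iota 1 (2 * N).+1 ++ [:: 2 * N.+1; (2 * N.+1).+1].
  rewrite (_ : (2 * N.+1).+1 = (2 * N).+1 + 2) ?iotaD; last lia.
  by congr (_ ++ [:: _; _]); lia.
have [IH_A IH_C] := IH (ltnW le_NK).
have iota_N : iota 1 N.+1 = iota 1 N ++ [:: N.+1] by rewrite -{1}(addn1 N) iotaD add1n.
rewrite iota_step iota_N !filter_cat !map_cat IH_A IH_C /= Aset_even Aset_odd.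
by have -> : (0 < N.+1) && (2 * N.+1 < 2 * K.+1) by lia.
Qed.

Lemma iota_double_last K : iota 1 (2 * K.+1) = iota 1 (2 * K).+1 ++ [:: 2 * K.+1].
Proof.
by rewrite {1}(_ : 2 * K.+1 = (2 * K).+1 + 1) ?iotaD; [congr (_ ++ [:: _]); lia | lia].
Qed.

Lemma Alist_eq K : Alist K.+1 = 1 :: [seq 2 * i | i <- iota 1 K].
Proof.
rewrite /Alist iota_double_last filter_cat (filter_Aset_iota (leqnn K)).1 /= Aset_even.
by rewrite ifF ?cats0 //; lia.
Qed.

Lemma Clist_eq K : Clist K.+1 = rcons [seq (2 * i).+1 | i <- iota 1 K] (2 * K.+1).
Proof.
rewrite /Clist iota_double_last filter_cat (filter_Aset_iota (leqnn K)).2 /= Aset_even.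
by rewrite ifT ?cats1 //; lia.
Qed.

Lemma size_Alist k : size (Alist k) = k.
Proof. by case: k => [|K] //; rewrite Alist_eq /= size_map size_iota. Qed.

Lemma size_Clist k : size (Clist k) = k.
Proof. by case: k => [|K] //; rewrite Clist_eq size_rcons size_map size_iota. Qed.

Lemma sorted_Alist k : sorted ltn (Alist k).
Proof. exact/sorted_filter/iota_ltn_sorted/ltn_trans. Qed.

Lemma sorted_Clist k : sorted ltn (Clist k).
Proof. exact/sorted_filter/iota_ltn_sorted/ltn_trans. Qed.

Lemma perm_Alist_Clist k : perm_eq (Alist k ++ Clist k) (iota 1 (2 * k)).
Proof. exact/permPl/perm_filterC. Qed.

Lemma Alist_lt_Clist k r j : r <= j < k -> nth 0 (Alist k) r < nth 0 (Clist k) j.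
Proof.
case: k => [|K] /andP[le_rj lt_jK] //.
have A_le : nth 0 (Alist K.+1) r <= (2 * r).+1.
  rewrite Alist_eq; case: r le_rj => [|r] //= le_rj.
  by rewrite (nth_map 0) ?size_iota ?nth_iota; lia.
have C_ge : (2 * j).+2 <= nth 0 (Clist K.+1) j.
  rewrite Clist_eq nth_rcons size_map size_iota.
  have [lt_jK'|->] : j < K \/ j = K by lia.
    by rewrite lt_jK' (nth_map 0) ?size_iota ?nth_iota //; lia.
  by rewrite ltnn eqxx; lia.
lia.
Qed.

Lemma count_notAset_iota K :
  count (fun j => ~~ Aset (2 * K.+2) j) (iota 1 (2 * K.+1)) = K.
Proof.
rewrite iota_double_last count_cat -size_filter (filter_Aset_iota (leqnSn K)).2.
by rewrite size_map size_iota /= Aset_even; lia.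
Qed.

Lemma count_id_negb (v : seq bool) : count id v + count negb v = size v.
Proof. exact: count_predC. Qed.

Lemma dyck_decomp k w : size w = 2 * k.+1 -> dyck w ->
  exists2 v, w = true :: v ++ [:: false] &
    [/\ count id v = k, count negb v = k &
        forall p, count negb (take p v) <= (count id (take p v)).+1].
Proof.
move=> size_w /andP[/eqP balanced /allP prefix_ok].
have {}prefix_ok p : p <= size w -> count negb (take p w) <= count id (take p w).
  by move=> le_pw; apply: prefix_ok; rewrite mem_iota; lia.
case: w => [|b w] /= in size_w balanced prefix_ok *; first lia.
case/lastP: w => [|v b'] /= in size_w balanced prefix_ok *; first lia.
rewrite -cats1 size_cat addn1 in size_w balanced prefix_ok *.
have b_u : b by have := prefix_ok 1 isT; rewrite /= take0; case: (b).
have prefix_v := prefix_ok (size v).+1 (leqnSn _).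
rewrite /= take_size_cat // b_u in prefix_v.
have b'_d : ~~ b' by move: balanced; rewrite b_u !count_cat; case: (b') => //=; lia.
rewrite b_u (negbTE b'_d) !count_cat /= in balanced *.
have := count_id_negb v; exists v => //; split; try lia.
move=> p; have [le_pv|lt_vp] := leqP p (size v); last by rewrite take_oversize; lia.
by have := prefix_ok p.+1; rewrite /= takel_cat // b_u; lia.
Qed.

Lemma sseq_interleave k b v t : size v = 2 * k ->
  sseq k (b :: v ++ t) = interleave 0 v (Alist k) (Clist k).
Proof.
move=> size_v; apply: (@eq_from_nth _ 0).
  by rewrite size_map size_iota size_interleave.
move=> p; rewrite size_map size_iota => lt_p2k.
rewrite (nth_map 0) ?size_iota // nth_iota // nth_interleave ?size_v // add1n /=.
rewrite drop0 nth_cat size_v lt_p2k takel_cat ?size_v // (take_nth false) ?size_v //.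
rewrite -cats1 count_cat /= eqxx addn1 /=.
by case: (nth false v p); [rewrite (eq_count eqb_id) | rewrite (eq_count eqbF_neg)].
Qed.

Section BallotInterleave.

Variables (k : nat) (v : seq bool).
Hypotheses (count_u : count id v = k) (count_d : count negb v = k).
Hypothesis ballot : forall p, count negb (take p v) <= (count id (take p v)).+1.

Let s := interleave 0 v (Alist k) (Clist k).

Lemma perm_interleave_lists : perm_eq s (iota 1 (2 * k)).
Proof.
apply: perm_trans (perm_Alist_Clist k).
by apply: perm_interleave; rewrite ?size_Alist ?size_Clist.
Qed.

Lemma cross_inversions_lists : cross_inversions [in Alist k] [in Clist k] s.
Proof.
apply: cross_inversions_interleave; rewrite ?size_Alist ?size_Clist //.
- exact: sorted_Alist.
- exact: sorted_Clist.
rewrite -[Alist k]drop0 -[Clist k]drop0; apply: below_pending_drop.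
  by move=> r j; rewrite size_Clist; apply: Alist_lt_Clist.
by move=> p; rewrite !add0n.
Qed.

Lemma interleave_not_top t : 2 <= k -> ~~ top_is (s ++ t) (2 * (k - 1)).
Proof.
rewrite /s subn1; case: k count_u count_d => [|[|K]] // cnt_u cnt_d _ /=.
set P := fun j => ~~ Aset (2 * K.+2) j.
have map_s : map P (interleave 0 v (Alist K.+2) (Clist K.+2)) = v.
  apply: map_interleave; rewrite ?size_Alist ?size_Clist ?cnt_u ?cnt_d //.
    by apply/allP => j; rewrite mem_filter /P /= negbK => /andP[].
  by apply/allP => j; rewrite mem_filter => /andP[].
have := count_id_negb v; rewrite cnt_u cnt_d => size_v.
rewrite /top_is takel_cat ?size_interleave; last lia.
apply/negP => /permP/(_ P); rewrite count_notAset_iota.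
have -> : count P (take (2 * K.+1) (interleave 0 v (Alist K.+2) (Clist K.+2)))
          = count id (take (2 * K.+1) v) by rewrite -{2}map_s -map_take count_map.
have := ballot (2 * K.+1); have := count_id_negb (take (2 * K.+1) v).
by rewrite size_takel; lia.
Qed.

End BallotInterleave.

Lemma DX_cross_inversions n k q : 2 * k <= n -> is_order n q ->
  cross_inversions [in Alist k] [in Clist k] q -> DX n (Aset n) q.
Proof.
move=> le_2k_n order_q inv_q; split=> // i j l gt0_i lt_ij lt_jl le_ln.
have in_q x : 1 <= x <= n -> x \in q by rewrite (perm_mem order_q) mem_iota; lia.
have inv x y : index y q < index x q -> 1 <= x -> x < y -> y <= n ->
    [/\ Aset (2 * k) x, ~~ Aset (2 * k) y & y <= 2 * k].
  move=> lt_idx gt0_x lt_xy le_yn.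
  have [x_q y_q] : x \in q /\ y \in q by split; apply: in_q; lia.
  case/andP: (inv_q x y lt_xy x_q y_q lt_idx); rewrite !mem_filter !mem_iota.
  by move=> /andP[Ax _] /and3P[Cy _ lt_y]; split=> //; lia.
have [le_jn lt_il gt0_j] : [/\ j <= n, i < l & 0 < j] by split; lia.
split=> [Aj | nAj]; apply/negP.
- case/andP=> /inv/(_ gt0_i lt_ij le_jn)[_ Cj _] /inv/(_ gt0_i lt_il le_ln)[_ _ le_l2k].
  by rewrite (Aset_narrow (N := n) _ Aj) in Cj; lia.
- case/andP=> _ /inv/(_ gt0_j lt_jl le_ln)[Aj _ _].
  by rewrite (Aset_widen le_2k_n Aj) in nAj.
Qed.

Theorem lemma4 (n k : nat) (w : seq bool) :
  2 <= n -> 1 <= k -> 2 * k <= n ->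
  size w = 2 * k.+1 -> dyck w ->
  exists q : seq nat, in_part n k q /\ take (2 * k) q = sseq k w.
Proof.
move=> _ _ le_2k_n size_w dyck_w.
have [v -> [count_u count_d ballot]] := dyck_decomp size_w dyck_w.
have size_v : size v = 2 * k by rewrite -count_id_negb; lia.
set s := interleave 0 v (Alist k) (Clist k).
have perm_s : perm_eq s (iota 1 (2 * k)) := perm_interleave_lists count_u count_d.
have size_s : size s = 2 * k by rewrite size_interleave.
exists (s ++ iota (2 * k).+1 (n - 2 * k)).
split; last by rewrite take_size_cat // sseq_interleave.
split; [|split; [by rewrite /top_is take_size_cat | exact: interleave_not_top]].
apply: (DX_cross_inversions le_2k_n).
  by rewrite /is_order -{2}(subnKC le_2k_n) iotaD perm_cat2r.
apply: cross_inversions_cat; first exact: cross_inversions_lists.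
  exact: iota_ltn_sorted.
by move=> x y; rewrite (perm_mem perm_s) !mem_iota; lia.
Qed.
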